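(* Let $n\in\mathbb{N}$ and let $u(x,t_r)$ be smooth on $\mathbb{R}^2$. Let $F_n(z,x,t_r)=\prod_{j=1}^n(z-\mu_j(x,t_r))$ and $H_n(z,x,t_r)=\prod_{j=1}^n(z-\nu_j(x,t_r))$, and suppose their constant coefficients (coefficients of $z^0$) are $f_n=\alpha e^{-iu}$ and $h_n=\beta e^{iu}$ with constants $\alpha,\beta$, where $\alpha\beta=\prod_{m=1}^{2n}E_m\neq0$ (the $E_m$ as in the context). Then $$u(x,t_r)=i\ln\Big((-1)^n\alpha^{-1}\prod_{j=1}^n\mu_j(x,t_r)\Big),\qquad u(x,t_r)=-i\ln\Big((-1)^n\beta^{-1}\prod_{j=1}^n\nu_j(x,t_r)\Big).$$
   Context: This is in the setting where $F_n$, $H_n$ and a polynomial $G_{n-1}$ (coefficients smooth in $(x,t_r)$) satisfy $F_{n,x}=-iu_xF_n-2izG_{n-1}$, $H_{n,x}=iu_xH_n+2izG_{n-1}$, $G_{n-1,x}=i(H_n-F_n)$ and $z^2G_{n-1}^2+zF_nH_n=\prod_{m=0}^{2n}(z-E_m)$ with $E_0=0$ and $E_m\neq0$ for $m=1,\dots,2n$. *)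

From Stdlib Require Import Reals List.
From Coquelicot Require Import Coquelicot.
Open Scope R_scope.

Definition Cexp (z : C) : C :=
  (exp (Re z) * cos (Im z), exp (Re z) * sin (Im z)).

Fixpoint Cpow (z : C) (k : nat) : C :=
  match k with O => RtoC 1 | S k' => Cmult z (Cpow z k') end.

Definition Cprod (n : nat) (f : nat -> C) : C :=
  fold_right Cmult (RtoC 1) (map f (seq 0 n)).

Definition Cprod_from (a n : nat) (f : nat -> C) : C :=
  fold_right Cmult (RtoC 1) (map f (seq a n)).

Definition Cpoly (d : nat) (c : nat -> R -> R -> C) (z : C) (x t : R) : C :=
  fold_right Cplus (RtoC 0) (map (fun k => Cmult (c k x t) (Cpow z k)) (seq 0 (S d))).

Definition is_derive_C (f : R -> C) (x : R) (l : C) : Prop :=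
  @is_derive R_AbsRing C_R_NormedModule f x l.

(* C^infinity on R^2: a family of all iterated partial derivatives
   D i j = d^i/dx^i d^j/dt^j f, each jointly continuous. *)
Definition smooth2 (f : R -> R -> R) : Prop :=
  exists D : nat -> nat -> R -> R -> R,
    (forall x t, D O O x t = f x t) /\
    (forall i j x t, is_derive (fun y => D i j y t) x (D (S i) j x t)) /\
    (forall i j x t, is_derive (fun s => D i j x s) t (D i (S j) x t)) /\
    (forall i j x t, continuous (fun p : R * R => D i j (fst p) (snd p)) (x, t)).

Definition smoothC2 (f : R -> R -> C) : Prop :=
  smooth2 (fun x t => Re (f x t)) /\ smooth2 (fun x t => Im (f x t)).

(* Evaluating F_n = prod_j (z - mu_j) at z = 0 gives its constant coefficient
   f_n = (-1)^n prod_j mu_j.  Since f_n = alpha e^{-iu} and alpha <> 0 (because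
   alpha beta = prod_m E_m <> 0), L = -iu is a logarithm of
   (-1)^n alpha^{-1} prod_j mu_j, i.e. u = iL; symmetrically for H_n with
   L = iu. *)

From Stdlib Require Import Reals List Lia.
From Coquelicot Require Import Coquelicot.
Open Scope R_scope.

Lemma fold_Cplus_map_eq0 (f : nat -> C) (l : list nat) :
  (forall k, In k l -> f k = RtoC 0) -> fold_right Cplus (RtoC 0) (map f l) = RtoC 0.
Proof.
  induction l as [|a l IH]; intros Hf; simpl; [reflexivity|].
  rewrite (Hf a (in_eq a l)), IH by (intros k Hk; apply Hf, in_cons, Hk).
  ring.
Qed.

Lemma Cpoly_at_0 (d : nat) (c : nat -> R -> R -> C) (x t : R) :
  Cpoly d c (RtoC 0) x t = c O x t.
Proof.
  unfold Cpoly; cbn [seq map fold_right].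
  rewrite fold_Cplus_map_eq0.
  - simpl; ring.
  - intros [|k] Hk; [apply in_seq in Hk; lia|].
    simpl; ring.
Qed.

Lemma Cprod_from_opp (m : nat -> C) (n : nat) : forall a,
  Cprod_from a n (fun j => Cminus (RtoC 0) (m j))
  = Cmult (Cpow (RtoC (-1)) n) (Cprod_from a n m).
Proof.
  unfold Cprod_from.
  induction n as [|n IH]; intros a; simpl; [ring|].
  rewrite IH.
  replace (RtoC (-1)) with (Copp (RtoC 1)) by (apply injective_projections; simpl; ring).
  ring.
Qed.

Lemma Cpoly_coeff0_roots (n : nat) (c : nat -> R -> R -> C) (m : nat -> R -> R -> C)
    (x t : R) :
  (forall z, Cpoly n c z x t = Cprod n (fun j => Cminus z (m j x t))) ->
  c O x t = Cmult (Cpow (RtoC (-1)) n) (Cprod n (fun j => m j x t)).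
Proof.
  intros Hroots.
  rewrite <- (Cpoly_at_0 n c x t), Hroots.
  apply Cprod_from_opp.
Qed.

Lemma solve_Cmult_eq (n : nat) (a K P : C) :
  a <> RtoC 0 ->
  Cmult (Cpow (RtoC (-1)) n) P = Cmult a K ->
  K = Cmult (Cmult (Cpow (RtoC (-1)) n) (Cinv a)) P.
Proof.
  intros Ha HP.
  transitivity (Cmult (Cinv a) (Cmult a K)); [field; exact Ha|].
  rewrite <- HP; ring.
Qed.

Lemma Cmult_neq0_l (a b : C) : Cmult a b <> RtoC 0 -> a <> RtoC 0.
Proof. intros Hab Ha; apply Hab; rewrite Ha; ring. Qed.

Lemma Cmult_neq0_r (a b : C) : Cmult a b <> RtoC 0 -> b <> RtoC 0.
Proof. intros Hab Hb; apply Hab; rewrite Hb; ring. Qed.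

Theorem lemma4p5 (n : nat) (u : R -> R -> R)
  (mu nu : nat -> R -> R -> C)          (* mu_{j+1}, nu_{j+1} for j = 0..n-1 *)
  (fc hc : nat -> R -> R -> C)          (* coefficients of F_n, H_n (degree n) *)
  (gc : nat -> R -> R -> C)             (* coefficients of G_{n-1} (degree <= n-1) *)
  (E : nat -> C) (alpha beta : C) :
  smooth2 u ->
  (forall k, smoothC2 (fc k)) ->
  (forall k, smoothC2 (hc k)) ->
  (forall k, smoothC2 (gc k)) ->
  (* F_n = prod_j (z - mu_j), H_n = prod_j (z - nu_j) *)
  (forall z x t, Cpoly n fc z x t = Cprod n (fun j => Cminus z (mu j x t))) ->
  (forall z x t, Cpoly n hc z x t = Cprod n (fun j => Cminus z (nu j x t))) ->
  (* the context: E_0 = 0, E_m <> 0 for m = 1..2n *)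
  E O = RtoC 0 ->
  (forall m, (1 <= m <= 2 * n)%nat -> E m <> RtoC 0) ->
  (* the Lax-type x-equations *)
  (forall z x t,
     is_derive_C (fun y => Cpoly n fc z y t) x
       (Cminus (Cmult (Cmult (Copp Ci) (RtoC (Derive (fun y => u y t) x))) (Cpoly n fc z x t))
               (Cmult (Cmult (RtoC 2) (Cmult Ci z)) (Cpoly (n - 1) gc z x t)))) ->
  (forall z x t,
     is_derive_C (fun y => Cpoly n hc z y t) x
       (Cplus (Cmult (Cmult Ci (RtoC (Derive (fun y => u y t) x))) (Cpoly n hc z x t))
              (Cmult (Cmult (RtoC 2) (Cmult Ci z)) (Cpoly (n - 1) gc z x t)))) ->
  (forall z x t,
     is_derive_C (fun y => Cpoly (n - 1) gc z y t) x
       (Cmult Ci (Cminus (Cpoly n hc z x t) (Cpoly n fc z x t)))) ->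
  (* z^2 G^2 + z F H = prod_{m=0}^{2n} (z - E_m) *)
  (forall z x t,
     Cplus (Cmult (Cpow z 2) (Cpow (Cpoly (n - 1) gc z x t) 2))
           (Cmult z (Cmult (Cpoly n fc z x t) (Cpoly n hc z x t)))
     = Cprod (S (2 * n)) (fun m => Cminus z (E m))) ->
  (* constant coefficients *)
  (forall x t, fc O x t = Cmult alpha (Cexp (Cmult (Copp Ci) (RtoC (u x t))))) ->
  (forall x t, hc O x t = Cmult beta (Cexp (Cmult Ci (RtoC (u x t))))) ->
  Cmult alpha beta = Cprod_from 1 (2 * n) E ->
  Cprod_from 1 (2 * n) E <> RtoC 0 ->
  forall x t,
    (exists L : C,
        Cexp L = Cmult (Cmult (Cpow (RtoC (-1)) n) (Cinv alpha)) (Cprod n (fun j => mu j x t))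
        /\ RtoC (u x t) = Cmult Ci L)
    /\
    (exists L : C,
        Cexp L = Cmult (Cmult (Cpow (RtoC (-1)) n) (Cinv beta)) (Cprod n (fun j => nu j x t))
        /\ RtoC (u x t) = Cmult (Copp Ci) L).
Proof.
  intros _ _ _ _ HF HH _ _ _ _ _ _ Hf0 Hh0 Hab HE x t.
  rewrite <- Hab in HE.
  split.
  - exists (Cmult (Copp Ci) (RtoC (u x t))); split.
    + apply solve_Cmult_eq; [exact (Cmult_neq0_l _ _ HE)|].
      rewrite <- Hf0; symmetry; apply Cpoly_coeff0_roots; intro z; apply HF.
    + apply injective_projections; simpl; ring.
  - exists (Cmult Ci (RtoC (u x t))); split.
    + apply solve_Cmult_eq; [exact (Cmult_neq0_r _ _ HE)|].
      rewrite <- Hh0; symmetry; apply Cpoly_coeff0_roots; intro z; apply HH.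
    + apply injective_projections; simpl; ring.
Qed.
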